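(* Let $(X,p)$ be a complete partial metric space and $(Y,h)$ a partial metric space, and let $f,g:X\to Y$ be sequentially continuous and consistent. Suppose there are real numbers $r$, $A\ge0$ and $0<c<1$ such that for every $x\in X$ there exists $z\in X$ with $$h(f(z),g(z))-h(f(z),f(z))\le c[h(f(x),g(x))-h(f(x),f(x))],\qquad h(f(z),g(z))-h(g(z),g(z))\le c[h(f(x),g(x))-h(g(x),g(x))],$$ $$r\le p(z,z)\le p(x,z)\le r+A[h(f(x),g(x))-h(f(x),f(x))],\qquad r\le p(z,z)\le p(x,z)\le r+A[h(f(x),g(x))-h(g(x),g(x))]$$ (i.e. $f$ and $g$ are $(f,g)$-mutually $c_r$-contractive). Then $f$ and $g$ have a coincidence point, i.e. there is $a\in X$ with $f(a)=g(a)$.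
   Context: A partial metric on a set $Z$ is $q:Z\times Z\to\mathbb{R}$ with, for all $x,y,z$: $q(x,x)\le q(x,y)$; $q(x,y)=q(y,x)$; $q(x,x)=q(x,y)=q(y,y)$ iff $x=y$; $q(x,y)\le q(x,z)+q(z,y)-q(z,z)$. Each partial metric space carries the topology generated by the balls $\{y\mid q(x,y)-q(x,x)<\epsilon\}$, so $a$ is a limit of $\{x_i\}$ iff for every $\epsilon>0$ there is $N$ with $q(a,x_i)-q(a,a)<\epsilon$ for all $i>N$. $\{x_i\}$ is Cauchy with central distance $r$ if for every $\epsilon>0$ there is $N$ with $|q(x_i,x_j)-r|<\epsilon$ for $i\ge j>N$; a special limit is a limit $a$ with $q(a,a)=r$; the space is complete if every Cauchy sequence has a special limit. $f:X\to Y$ is sequentially continuous if whenever $a$ is a limit of $\{x_i\}$ in $X$, $f(a)$ is a limit of $\{f(x_i)\}$ in $Y$. $f$ is consistent if for all $x,z\in X$, $p(x,x)\le p(z,z)$ implies $h(f(x),f(x))\le h(f(z),f(z))$. *)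

From Stdlib Require Import Reals Lra Lia.
Open Scope R_scope.

Definition is_partial_metric {Z : Type} (q : Z -> Z -> R) : Prop :=
  (forall x y, q x x <= q x y) /\
  (forall x y, q x y = q y x) /\
  (forall x y, (q x x = q x y /\ q x y = q y y) <-> x = y) /\
  (forall x y z, q x y <= q x z + q z y - q z z).

Definition pm_limit {Z : Type} (q : Z -> Z -> R) (xs : nat -> Z) (a : Z) : Prop :=
  forall eps, 0 < eps -> exists N : nat, forall i : nat, (i > N)%nat ->
    q a (xs i) - q a a < eps.

Definition pm_cauchy {Z : Type} (q : Z -> Z -> R) (xs : nat -> Z) (r : R) : Prop :=
  forall eps, 0 < eps -> exists N : nat, forall i j : nat, (i >= j)%nat -> (j > N)%nat ->
    Rabs (q (xs i) (xs j) - r) < eps.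

Definition pm_special_limit {Z : Type} (q : Z -> Z -> R) (xs : nat -> Z) (r : R) (a : Z) : Prop :=
  pm_limit q xs a /\ q a a = r.

Definition pm_complete {Z : Type} (q : Z -> Z -> R) : Prop :=
  forall (xs : nat -> Z) (r : R), pm_cauchy q xs r -> exists a, pm_special_limit q xs r a.

Definition seq_continuous {X Y : Type} (p : X -> X -> R) (h : Y -> Y -> R) (f : X -> Y) : Prop :=
  forall (xs : nat -> X) (a : X), pm_limit p xs a -> pm_limit h (fun i => f (xs i)) (f a).

Definition pm_consistent {X Y : Type} (p : X -> X -> R) (h : Y -> Y -> R) (f : X -> Y) : Prop :=
  forall x z : X, p x x <= p z z -> h (f x) (f x) <= h (f z) (f z).

Definition mutually_contractive {X Y : Type} (p : X -> X -> R) (h : Y -> Y -> R)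
  (f g : X -> Y) (r A c : R) : Prop :=
  forall x : X, exists z : X,
    h (f z) (g z) - h (f z) (f z) <= c * (h (f x) (g x) - h (f x) (f x)) /\
    h (f z) (g z) - h (g z) (g z) <= c * (h (f x) (g x) - h (g x) (g x)) /\
    r <= p z z /\ p z z <= p x z /\ p x z <= r + A * (h (f x) (g x) - h (f x) (f x)) /\
    p x z <= r + A * (h (f x) (g x) - h (g x) (g x)).

(** The contraction hypothesis lets us pick, from any point, a next point whose
    two defects [h(fx,gx) - h(fx,fx)] and [h(fx,gx) - h(gx,gx)] shrink by the
    factor [c], while the partial distance to it exceeds [r] by at most [A]
    times the defect.  Iterating gives a sequence whose steps exceed [r] by a
    geometric amount, so by the partial-metric triangle inequality it is Cauchy
    with central distance [r]; let [a] be its special limit.  Since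
    [p(a,a) = r <= p(s_n,s_n)], consistency gives [h(fa,fa) <= h(fs_n,fs_n)]
    and [h(ga,ga) <= h(gs_n,gs_n)], and going around the quadrilateral
    [fa, fs_n, gs_n, ga] bounds both defects at [a] by quantities tending to
    [0] by continuity.  Vanishing defects force [f a = g a]. *)

From Stdlib Require Import Reals Lra Lia ClassicalEpsilon.
Open Scope R_scope.

Lemma Rle_0_of_lt_eps (x : R) : (forall eps, 0 < eps -> x < eps) -> x <= 0.
Proof.
  intros Hx; apply Rle_plus_epsilon; intros eps Heps.
  specialize (Hx eps Heps); lra.
Qed.

Lemma geometric_eventually_lt (K c eps : R) :
  0 <= K -> 0 <= c < 1 -> 0 < eps ->
  exists N : nat, forall n, (n >= N)%nat -> K * c ^ n < eps.
Proof.
  intros HK Hc Heps.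
  assert (Habs : Rabs c < 1) by (rewrite Rabs_pos_eq; lra).
  assert (Hpos : 0 < eps / (K + 1)) by (apply Rdiv_lt_0_compat; lra).
  destruct (pow_lt_1_zero c Habs _ Hpos) as [N HN]; exists N; intros n Hn.
  specialize (HN n Hn); rewrite Rabs_pos_eq in HN by (apply pow_le; lra).
  assert (HKeps : (K + 1) * (eps / (K + 1)) = eps) by (field; lra).
  assert (Hcn : 0 <= c ^ n) by (apply pow_le; lra).
  nra.
Qed.

Lemma geometric_decay (u : nat -> R) (c : R) :
  0 <= c -> (forall n, u (S n) <= c * u n) -> forall n, u n <= c ^ n * u 0%nat.
Proof.
  intros Hc Hu; induction n as [|n IH]; cbn [pow]; [lra|].
  specialize (Hu n); apply Rmult_le_compat_l with (r := c) in IH; lra.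
Qed.

Lemma orbit_of_total_rel (T : Type) (rel : T -> T -> Prop) :
  inhabited T -> (forall x, exists z, rel x z) ->
  exists s : nat -> T, forall n, rel (s n) (s (S n)).
Proof.
  intros [x0] Hrel; destruct (choice rel Hrel) as [next Hnext].
  exists (fun n => Nat.iter n next x0); intro n; apply Hnext.
Qed.

Section PartialMetric.

Context {Z : Type} (q : Z -> Z -> R).
Hypothesis Hq : is_partial_metric q.

Lemma pm_self_le_l x y : q x x <= q x y.
Proof. apply (proj1 Hq). Qed.

Lemma pm_sym x y : q x y = q y x.
Proof. apply (proj1 (proj2 Hq)). Qed.

Lemma pm_self_le_r x y : q y y <= q x y.
Proof. rewrite (pm_sym x y); apply pm_self_le_l. Qed.

Lemma pm_triangle x y z : q x y <= q x z + q z y - q z z.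
Proof. apply (proj2 (proj2 (proj2 Hq))). Qed.

Lemma pm_eq_of_le_self x y : q x y <= q x x -> q x y <= q y y -> x = y.
Proof.
  intros Hx Hy; apply (proj1 (proj2 (proj2 Hq))).
  pose proof (pm_self_le_l x y); pose proof (pm_self_le_r x y); split; lra.
Qed.

Lemma pm_quadrilateral u v u' v' :
  q u v <= q u u' + q u' v' + q v v' - q u' u' - q v' v'.
Proof.
  pose proof (pm_triangle u v u'); pose proof (pm_triangle u' v v').
  rewrite (pm_sym v' v) in *; lra.
Qed.

Section GeometricChain.

Variables (s : nat -> Z) (r M c : R).
Hypotheses (HM : 0 <= M) (Hc : 0 <= c < 1).
Hypothesis Hself : forall n, r <= q (s n) (s n).
Hypothesis Hstep : forall n, q (s n) (s (S n)) <= r + M * c ^ n.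

Lemma chain_bound_succ j k :
  q (s j) (s (j + S k)%nat) - r <= M * c ^ j * (1 - c ^ S k) / (1 - c).
Proof.
  induction k as [|k IH].
  - rewrite Nat.add_1_r; pose proof (Hstep j).
    replace (M * c ^ j * (1 - c ^ 1) / (1 - c)) with (M * c ^ j) by (simpl; field; lra).
    lra.
  - rewrite Nat.add_succ_r.
    pose proof (pm_triangle (s j) (s (S (j + S k))) (s (j + S k)%nat)).
    pose proof (Hstep (j + S k)%nat); pose proof (Hself (j + S k)%nat).
    rewrite pow_add in *.
    assert (Hsum : M * c ^ j * (1 - c ^ S k) / (1 - c) + M * (c ^ j * c ^ S k)
              = M * c ^ j * (1 - c ^ S (S k)) / (1 - c)) by (simpl; field; lra).
    lra.
Qed.

Lemma chain_bound i j : (j <= i)%nat -> q (s i) (s j) - r <= M * c ^ j / (1 - c).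
Proof.
  intros Hji.
  assert (Hmcj : 0 <= M * c ^ j) by (apply Rmult_le_pos; [|apply pow_le]; lra).
  assert (Hinv : 0 < / (1 - c)) by (apply Rinv_0_lt_compat; lra).
  assert (Hle : M * c ^ j <= M * c ^ j / (1 - c)).
  { assert (Hmul : M * c ^ j / (1 - c) * (1 - c) = M * c ^ j) by (field; lra).
    nra. }
  destruct (Nat.eq_dec i j) as [->|Hne].
  - pose proof (pm_self_le_l (s j) (s (S j))); pose proof (Hstep j); lra.
  - replace i with (j + S (i - j - 1))%nat by lia; rewrite pm_sym.
    pose proof (chain_bound_succ j (i - j - 1)).
    assert (Hck : 0 <= c ^ S (i - j - 1)) by (apply pow_le; lra).
    assert (Hdrop : M * c ^ j * (1 - c ^ S (i - j - 1)) / (1 - c) <= M * c ^ j / (1 - c)).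
    { unfold Rdiv; apply Rmult_le_compat_r; nra. }
    lra.
Qed.

Lemma chain_cauchy : pm_cauchy q s r.
Proof.
  intros eps Heps.
  assert (HK : 0 <= M / (1 - c)).
  { apply Rmult_le_pos; [lra | apply Rlt_le, Rinv_0_lt_compat; lra]. }
  destruct (geometric_eventually_lt _ _ _ HK Hc Heps) as [N HN].
  exists N; intros i j Hij HjN.
  specialize (HN j ltac:(lia)).
  assert (Hsplit : M / (1 - c) * c ^ j = M * c ^ j / (1 - c)) by (field; lra).
  pose proof (chain_bound i j Hij).
  pose proof (pm_self_le_r (s i) (s j)); pose proof (Hself j).
  apply Rabs_def1; lra.
Qed.

End GeometricChain.

End PartialMetric.

Definition defect_l {X Y : Type} (h : Y -> Y -> R) (f g : X -> Y) (x : X) : R :=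
  h (f x) (g x) - h (f x) (f x).

Definition defect_r {X Y : Type} (h : Y -> Y -> R) (f g : X -> Y) (x : X) : R :=
  h (f x) (g x) - h (g x) (g x).

Section Coincidence.

Context {X Y : Type} (p : X -> X -> R) (h : Y -> Y -> R) (f g : X -> Y).
Hypothesis Hh : is_partial_metric h.

Lemma defect_l_ge0 x : 0 <= defect_l h f g x.
Proof. unfold defect_l; pose proof (pm_self_le_l h Hh (f x) (g x)); lra. Qed.

Lemma defect_r_ge0 x : 0 <= defect_r h f g x.
Proof. unfold defect_r; pose proof (pm_self_le_r h Hh (f x) (g x)); lra. Qed.

Lemma eq_of_defects_le0 x :
  defect_l h f g x <= 0 -> defect_r h f g x <= 0 -> f x = g x.
Proof. unfold defect_l, defect_r; intros; apply (pm_eq_of_le_self h Hh); lra. Qed.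

Hypotheses (Hfcon : pm_consistent p h f) (Hgcon : pm_consistent p h g).

Lemma defects_le_via a x : p a a <= p x x ->
  defect_l h f g a <= (h (f a) (f x) - h (f a) (f a)) + defect_l h f g x
                      + (h (g a) (g x) - h (g a) (g a)) /\
  defect_r h f g a <= (h (f a) (f x) - h (f a) (f a)) + defect_r h f g x
                      + (h (g a) (g x) - h (g a) (g a)).
Proof.
  intros Hax; unfold defect_l, defect_r.
  pose proof (Hfcon a x Hax); pose proof (Hgcon a x Hax).
  pose proof (pm_quadrilateral h Hh (f a) (g a) (f x) (g x)).
  split; lra.
Qed.

Hypotheses (Hfc : seq_continuous p h f) (Hgc : seq_continuous p h g).

Lemma coincidence_at_limit (s : nat -> X) (a : X) (c D E : R) :
  0 <= c < 1 -> pm_limit p s a -> (forall n, p a a <= p (s n) (s n)) ->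
  (forall n, defect_l h f g (s n) <= c ^ n * D) ->
  (forall n, defect_r h f g (s n) <= c ^ n * E) ->
  f a = g a.
Proof.
  intros Hc Hlim Hself HD HE.
  assert (HD0 : 0 <= D).
  { pose proof (HD 0%nat); pose proof (defect_l_ge0 (s 0%nat)); simpl in *; lra. }
  assert (HE0 : 0 <= E).
  { pose proof (HE 0%nat); pose proof (defect_r_ge0 (s 0%nat)); simpl in *; lra. }
  assert (Hsmall : forall eps, 0 < eps -> defect_l h f g a < eps /\ defect_r h f g a < eps).
  { intros eps Heps.
    assert (Heps3 : 0 < eps / 3) by lra.
    destruct (Hfc s a Hlim _ Heps3) as [N1 HN1].
    destruct (Hgc s a Hlim _ Heps3) as [N2 HN2].
    destruct (geometric_eventually_lt (D + E) c _ ltac:(lra) Hc Heps3) as [N3 HN3].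
    set (n := S (N1 + N2 + N3)).
    specialize (HN1 n ltac:(unfold n; lia)); specialize (HN2 n ltac:(unfold n; lia)).
    specialize (HN3 n ltac:(unfold n; lia)).
    destruct (defects_le_via a (s n) (Hself n)) as [Hl Hr].
    pose proof (HD n); pose proof (HE n).
    assert (Hcn : 0 <= c ^ n) by (apply pow_le; lra).
    simpl in HN1, HN2; split; nra. }
  apply eq_of_defects_le0; apply Rle_0_of_lt_eps; intros eps Heps; apply Hsmall, Heps.
Qed.

End Coincidence.

Theorem theorem7p11 (X Y : Type) (p : X -> X -> R) (h : Y -> Y -> R)
  (f g : X -> Y) (r A c : R) :
  inhabited X ->
  is_partial_metric p -> is_partial_metric h -> pm_complete p ->
  seq_continuous p h f -> seq_continuous p h g ->
  pm_consistent p h f -> pm_consistent p h g ->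
  0 <= A -> 0 < c -> c < 1 ->
  mutually_contractive p h f g r A c ->
  exists a : X, f a = g a.
Proof.
  intros Hinh Hp Hh Hcomp Hfc Hgc Hfcon Hgcon HA Hc0 Hc1 Hmc.
  destruct (orbit_of_total_rel _ _ Hinh Hmc) as [s Hs].
  assert (HD : forall n, defect_l h f g (s n) <= c ^ n * defect_l h f g (s 0%nat)).
  { apply geometric_decay; [lra|]; intro n; apply (Hs n). }
  assert (HE : forall n, defect_r h f g (s n) <= c ^ n * defect_r h f g (s 0%nat)).
  { apply geometric_decay; [lra|]; intro n; apply (Hs n). }
  set (M := A * defect_l h f g (s 0%nat)).
  assert (HM : 0 <= M) by (apply Rmult_le_pos; [lra | apply (defect_l_ge0 h f g Hh)]).
  (* Only points produced by the contraction satisfy [r <= p(z,z)], hence the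
     orbit is used from index 1 on. *)
  assert (Hself : forall n, r <= p (s (S n)) (s (S n))) by (intro n; apply (Hs n)).
  assert (Hstep : forall n, p (s (S n)) (s (S (S n))) <= r + (M * c) * c ^ n).
  { intro n; destruct (Hs (S n)) as (_ & _ & _ & _ & Hle & _).
    fold (defect_l h f g (s (S n))) in Hle.
    pose proof (Rmult_le_compat_l A _ _ HA (HD (S n))) as HAD.
    replace (M * c * c ^ n) with (A * (c ^ S n * defect_l h f g (s 0%nat)))
      by (unfold M; simpl; ring).
    lra. }
  assert (HMc : 0 <= M * c) by (apply Rmult_le_pos; lra).
  destruct (Hcomp _ r (chain_cauchy p Hp _ _ _ _ HMc (conj (Rlt_le _ _ Hc0) Hc1) Hself Hstep))
    as [a [Hlim Haa]].
  exists a; apply (coincidence_at_limit p h f g Hh Hfcon Hgcon Hfc Hgc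
                     (fun n => s (S n)) a c (c * defect_l h f g (s 0%nat))
                     (c * defect_r h f g (s 0%nat))).
  - split; lra.
  - exact Hlim.
  - intro n; rewrite Haa; apply Hself.
  - intro n; pose proof (HD (S n)); simpl in *; lra.
  - intro n; pose proof (HE (S n)); simpl in *; lra.
Qed.
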